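(* Let $k$ be an algebraically closed field of arbitrary characteristic. Fix integers $d_2\ge d_1>0$, a smooth quadric $Q\subset\mathbb{P}^3$, lines $L\in|\mathcal{O}_Q(1,0)|$ and $L'\in|\mathcal{O}_Q(0,1)|$, and let $\{q\}=L\cap L'$. Fix $o\in L\setminus\{q\}$ and $o'\in L'\setminus\{q\}$. Let $Z\subset L$ be the effective divisor $d_2\cdot o$ of $L$ and $Z'\subset L'$ the effective divisor $d_1\cdot o'$ of $L'$, regarded as zero-dimensional subschemes of $Q$ of degrees $d_2$ and $d_1$ respectively. Then there is a smooth divisor $Y\in|\mathcal{O}_Q(d_1,d_2)|$ such that $Y\cap L=Z$ and $Y\cap L'=Z'$ (in particular, set-theoretically $Y$ meets $L$ only at $o$ and $L'$ only at $o'$).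
   Context: $\mathcal{O}_Q(a,b)$ denotes the line bundle of bidegree $(a,b)$ on $Q\cong\mathbb{P}^1\times\mathbb{P}^1$; a curve in $|\mathcal{O}_Q(d_1,d_2)|$ meets a line of $|\mathcal{O}_Q(1,0)|$ in degree $d_2$ and a line of $|\mathcal{O}_Q(0,1)|$ in degree $d_1$. *)

From HB Require Import structures.
From mathcomp Require Import all_boot all_order all_algebra.
From mathcomp Require Export mpoly.
Set Implicit Arguments. Unset Strict Implicit. Unset Printing Implicit Defensive.
Import GRing.Theory.
Local Open Scope ring_scope.

(* Q = P^1 x P^1 with bihomogeneous coordinates (x0:x1 ; y0:y1),
   encoded as the four variables 'X_0 = x0, 'X_1 = x1, 'X_2 = y0, 'X_3 = y1
   of {mpoly K[4]}. *)
Definition vx0 : 'I_4 := @inord 3 0.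
Definition vx1 : 'I_4 := @inord 3 1.
Definition vy0 : 'I_4 := @inord 3 2.
Definition vy1 : 'I_4 := @inord 3 3.

(* F is bihomogeneous of bidegree (d1,d2): every monomial has degree d1 in
   (x0,x1) and degree d2 in (y0,y1).  Nonzero such F define the curves of
   |O_Q(d1,d2)|. *)
Definition bihomog (K : fieldType) (d1 d2 : nat) (F : {mpoly K[4]}) : bool :=
  all (fun m : 'X_{1..4} => (m vx0 + m vx1 == d1)%N && (m vy0 + m vy1 == d2)%N)
      (msupp F).

(* A point of P^1 is a nonzero vector of K^2 (up to scaling). *)
Definition pt4 (K : fieldType) (u v : K * K) : 'I_4 -> K :=
  fun i => nth 0 [:: u.1; u.2; v.1; v.2] i.

(* The curve V(F) ⊂ P^1 x P^1 is smooth: there is no point where F and all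
   four partial derivatives vanish (this is the Jacobian criterion for the
   hypersurface V(F), chart-independent thanks to the Euler relations). *)
Definition smooth_bihom (K : fieldType) (F : {mpoly K[4]}) : Prop :=
  forall u v : K * K, u != (0, 0) -> v != (0, 0) ->
    ~ (F.@[pt4 u v] = 0 /\ forall i : 'I_4, (F^`M(i)).@[pt4 u v] = 0).

(* Restriction of F to the line {(x0:x1) = a} x P^1 (a line of |O_Q(1,0)|):
   the binary form F(a0,a1,y0,y1). *)
Definition restr_x (K : fieldType) (a : K * K) (F : {mpoly K[4]}) : {mpoly K[4]} :=
  F \mPo [tuple a.1%:MP; a.2%:MP; 'X_vy0; 'X_vy1].

(* Restriction of F to the line P^1 x {(y0:y1) = b} (a line of |O_Q(0,1)|). *)
Definition restr_y (K : fieldType) (b : K * K) (F : {mpoly K[4]}) : {mpoly K[4]} :=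
  F \mPo [tuple 'X_vx0; 'X_vx1; b.1%:MP; b.2%:MP].

From HB Require Import structures.
From mathcomp Require Import all_boot all_order all_algebra.
From mathcomp Require Import mpoly separable ring.

Set Implicit Arguments.
Unset Strict Implicit.
Unset Printing Implicit Defensive.

Import GRing.Theory.
Local Open Scope ring_scope.

(** Let [X = xform e] and [A = xform a] be the linear forms on the first
    factor vanishing at [e] and [a], and [Y = yform c], [B = yform b] those
    on the second factor vanishing at [c] and [b], so that [L = {A = 0}], [L' = {B = 0}], [o = L ∩ {Y = 0}] and
    [o' = L' ∩ {X = 0}].  Take separable polynomials [p1], [p2] of degrees
    [d1], [d2] with [p1(0) = p2(0) = 0], let [H1(X, A)], [H2(Y, B)] be their
    homogenizations, and put [F = X^d1 Y^d2 - k H1 H2].  As [A] divides [H1]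
    and [B] divides [H2], [F] restricts to [X^d1 Y^d2] on [L] and on [L'],
    which are the required divisors.  Differentiating along the directions
    that kill [X] (resp. [Y]) shows that at a singular point [H1' H2 = 0] and
    [H1 H2' = 0]; separability forbids common zeros of [Hi] and [Hi'], so
    the point lies in the chart [X Y <> 0], where [F = 0] becomes
    [k p1(τ) p2(σ) = 1] at critical points [τ], [σ] of [p1], [p2].  Choosing
    [k] outside this finite set of values makes [F] smooth. *)

Section Homogenization.
Variable R : comNzRingType.
Implicit Types (p : {poly R}) (s t : R).

Definition homogenize (n : nat) p s t : R :=
  \sum_(i < n.+1) p`_i * (t ^+ i * s ^+ (n - i)).

Lemma homogenize_t0 n p s : homogenize n p s 0 = p`_0 * s ^+ n.
Proof.
rewrite /homogenize big_ord_recl /= expr0 mul1r subn0 big1 ?addr0 // => i _.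
by rewrite expr0n mul0r mulr0.
Qed.

End Homogenization.

Lemma rmorph_homogenize (R S : comNzRingType) (f : {rmorphism R -> S}) n
    (p : {poly R}) s t :
  f (homogenize n p s t) = homogenize n (map_poly f p) (f s) (f t).
Proof.
rewrite rmorph_sum; apply: eq_bigr => i _.
by rewrite coef_map !rmorphM !rmorphXn.
Qed.

Section HomogenizationField.
Variable K : fieldType.
Implicit Types (p : {poly K}) (s t : K).

Lemma homogenize_s0 n p t : homogenize n p 0 t = p`_n * t ^+ n.
Proof.
rewrite /homogenize big_ord_recr /= subnn expr0 mulr1 big1 ?add0r // => i _.
by rewrite expr0n subn_eq0 leqNgt ltn_ord /= !mulr0.
Qed.

Lemma homogenize_horner n p s t : s != 0 -> (size p <= n.+1)%N ->
  homogenize n p s t = s ^+ n * p.[t / s].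
Proof.
move=> s0 szp; rewrite (horner_coef_wide _ szp) mulr_sumr; apply: eq_bigr => i _.
have -> : s ^+ n = s ^+ (n - i) * s ^+ i by rewrite -exprD subnK // -ltnS.
rewrite expr_div_n; field; exact: expf_neq0.
Qed.

Lemma homogenize_deriv_horner n p s t : s != 0 -> size p = n.+2 ->
  homogenize n p^`() s t = s ^+ n * p^`().[t / s].
Proof.
move=> s0 szp; apply: homogenize_horner s0 _.
by rewrite -ltnS -szp lt_size_deriv // -size_poly_eq0 szp.
Qed.

Lemma homogenize_eq0_chart n p s t : size p = n.+1 -> (s, t) != (0, 0) ->
  homogenize n p s t = 0 -> s != 0.
Proof.
move=> szp st0 /eqP; apply: contraTneq => s0.
have t0 : t != 0 by apply: contraNneq st0 => t0; rewrite s0 t0.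
have lc : p`_n = lead_coef p by rewrite lead_coefE szp.
rewrite s0 homogenize_s0 lc mulf_neq0 ?expf_neq0 //.
by rewrite lead_coef_eq0 -size_poly_eq0 szp.
Qed.

Lemma homogenize_deriv_neq0 n p s t :
  separable_poly p -> size p = n.+2 -> (s, t) != (0, 0) ->
  homogenize n.+1 p s t = 0 -> homogenize n p^`() s t != 0.
Proof.
move=> sep_p szp st0 hp0; have s0 := homogenize_eq0_chart szp st0 hp0.
have root_p : root p (t / s).
  move/eqP: hp0; rewrite homogenize_horner ?szp //.
  by rewrite mulf_eq0 expf_eq0 (negbTE s0) andbF.
rewrite homogenize_deriv_horner // mulf_neq0 ?expf_neq0 //.
by rewrite unlock in sep_p; exact: coprimep_root sep_p root_p.
Qed.

(** [s, t, y, z] stand for the values of the linear forms [X, A, Y, B] at a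
    point of [Q]. *)
Lemma model_curve_nonsingular m n p1 p2 k s t y z :
  separable_poly p1 -> size p1 = m.+2 -> separable_poly p2 -> size p2 = n.+2 ->
  k != 0 ->
  (forall x1 x2, root p1^`() x1 -> root p2^`() x2 -> k * (p1.[x1] * p2.[x2]) != 1) ->
  (s, t) != (0, 0) -> (y, z) != (0, 0) ->
  s ^+ m.+1 * y ^+ n.+1 = k * (homogenize m.+1 p1 s t * homogenize n.+1 p2 y z) ->
  homogenize m p1^`() s t * homogenize n.+1 p2 y z = 0 ->
  homogenize m.+1 p1 s t * homogenize n p2^`() y z = 0 -> False.
Proof.
set h1 := homogenize m.+1 p1 s t; set h2 := homogenize n.+1 p2 y z.
move=> sep1 sz1 sep2 sz2 k0 k_generic st0 yz0 eq0 eq1 eq2.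
have simple1 := homogenize_deriv_neq0 sep1 sz1 st0.
have simple2 := homogenize_deriv_neq0 sep2 sz2 yz0.
have [h1_0|h1_0] := eqVneq h1 0.
  have h2_0 : h2 = 0.
    by move/eqP: eq1; rewrite mulf_eq0 (negbTE (simple1 h1_0)) => /eqP.
  have s0 := homogenize_eq0_chart sz1 st0 h1_0.
  have y0 := homogenize_eq0_chart sz2 yz0 h2_0.
  move/eqP: eq0; rewrite h1_0 mul0r mulr0 mulf_eq0 !expf_eq0.
  by rewrite (negbTE s0) (negbTE y0) !andbF.
have h2_0 : h2 != 0.
  apply: contra h1_0 => /eqP h2_0.
  by move/eqP: eq2; rewrite mulf_eq0 (negbTE (simple2 h2_0)) orbF.
have lhs0 : s ^+ m.+1 * y ^+ n.+1 != 0 by rewrite eq0 !mulf_neq0.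
have s0 : s != 0 by apply: contraNneq lhs0 => ->; rewrite expr0n mul0r.
have y0 : y != 0 by apply: contraNneq lhs0 => ->; rewrite expr0n mulr0.
have root1 : root p1^`() (t / s).
  move/eqP: eq1; rewrite mulf_eq0 (negbTE h2_0) orbF homogenize_deriv_horner //.
  by rewrite mulf_eq0 expf_eq0 (negbTE s0) andbF.
have root2 : root p2^`() (z / y).
  move/eqP: eq2; rewrite mulf_eq0 (negbTE h1_0) homogenize_deriv_horner //.
  by rewrite mulf_eq0 expf_eq0 (negbTE y0) andbF.
move/eqP: (k_generic _ _ root1 root2); apply; apply: (mulfI lhs0).
by rewrite mulr1 [RHS]eq0 /h1 /h2 !homogenize_horner ?sz1 ?sz2 //; ring.
Qed.

End HomogenizationField.

Section HomogenizeMpoly.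
Variables (n : nat) (R : comNzRingType).
Implicit Types (p : {poly R}) (F G : {mpoly R[n]}).

Lemma meval_homogenize v m p F G :
  (homogenize m (map_poly (@mpolyC n R) p) F G).@[v] = homogenize m p F.@[v] G.@[v].
Proof.
rewrite rmorph_homogenize -map_poly_comp map_poly_id // => c _.
exact: mevalC.
Qed.

Lemma comp_mpoly_homogenize k (lq : n.-tuple {mpoly R[k]}) m p F G :
  homogenize m (map_poly (@mpolyC n R) p) F G \mPo lq =
  homogenize m (map_poly (@mpolyC k R) p) (F \mPo lq) (G \mPo lq).
Proof.
rewrite rmorph_homogenize -map_poly_comp; congr homogenize.
by apply: eq_map_poly => c; exact: comp_mpolyC.
Qed.

End HomogenizeMpoly.

Section DirectionalDerivative.
Variables (n : nat) (R : comNzRingType) (w : 'I_n -> R).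
Implicit Types (p q : {mpoly R[n]}).

Definition mderivdir p : {mpoly R[n]} := \sum_i w i *: p^`M(i).

Lemma mderivdir_is_linear : linear mderivdir.
Proof.
move=> c p q; rewrite /mderivdir scaler_sumr -big_split /=; apply: eq_bigr => i _.
by rewrite mderivD mderivZ scalerDr !scalerA mulrC.
Qed.

HB.instance Definition _ := GRing.isLinear.Build R {mpoly R[n]} {mpoly R[n]}
  _ mderivdir mderivdir_is_linear.

Lemma mderivdirC c : mderivdir c%:MP = 0.
Proof. by rewrite /mderivdir big1 // => i _; rewrite mderivC scaler0. Qed.

Lemma mderivdirX i : mderivdir 'X_i = (w i)%:MP.
Proof.
have dX j : ('X_i : {mpoly R[n]})^`M(j) = (i == j)%:R.
  rewrite mderivX mnm1E; case: eqP => [<-|_]; last by rewrite scale0r.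
  have -> : (U_(i) - U_(i) = 0)%MM by apply/mnmP => l; rewrite mnmBE subnn mnmE.
  by rewrite mpolyX0 scale1r.
rewrite /mderivdir (bigD1 i) //= big1 ?addr0 => [|j ji].
  by rewrite dX eqxx -alg_mpolyC.
by rewrite dX eq_sym (negbTE ji) scaler0.
Qed.

Lemma mderivdirM p q : mderivdir (p * q) = mderivdir p * q + p * mderivdir q.
Proof.
rewrite /mderivdir mulr_suml mulr_sumr -big_split /=; apply: eq_bigr => i _.
by rewrite mderivM scalerDr scalerAl scalerAr.
Qed.

Lemma mderivdirXn p k : mderivdir (p ^+ k.+1) = (p ^+ k *+ k.+1) * mderivdir p.
Proof.
elim: k => [|k IHk]; first by rewrite expr1 expr0 mul1r.
by rewrite exprS mderivdirM IHk [p ^+ k.+1]exprS; ring.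
Qed.

Lemma meval_mderivdir v p : (mderivdir p).@[v] = \sum_i w i * (p^`M(i)).@[v].
Proof.
by rewrite /mderivdir rmorph_sum; apply: eq_bigr => i _; apply: mevalZ.
Qed.

Lemma mderivdir_homogenize m (q : {poly {mpoly R[n]}}) (A B : {mpoly R[n]}) :
  (forall i, mderivdir q`_i = 0) -> mderivdir A = 0 ->
  mderivdir (homogenize m.+1 q A B) = mderivdir B * homogenize m q^`() A B.
Proof.
move=> Dq DA; have DAX j : mderivdir (A ^+ j) = 0.
  by case: j => [|j]; rewrite ?expr0 -?mpolyC1 ?mderivdirC // mderivdirXn DA mulr0.
rewrite /homogenize linear_sum big_ord_recl /= mulr_sumr.
rewrite expr0 mul1r mderivdirM Dq DAX mul0r mulr0 !add0r.
apply: eq_bigr => i _; rewrite /bump /= add1n subSS coef_deriv.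
rewrite !mderivdirM Dq DAX mderivdirXn; ring.
Qed.

End DirectionalDerivative.

Section Nth4.
Variables (T : Type) (x0 A B C D : T).
Lemma nth4_vx0 : nth x0 [:: A; B; C; D] vx0 = A. Proof. by rewrite inordK. Qed.
Lemma nth4_vx1 : nth x0 [:: A; B; C; D] vx1 = B. Proof. by rewrite inordK. Qed.
Lemma nth4_vy0 : nth x0 [:: A; B; C; D] vy0 = C. Proof. by rewrite inordK. Qed.
Lemma nth4_vy1 : nth x0 [:: A; B; C; D] vy1 = D. Proof. by rewrite inordK. Qed.
End Nth4.

Section Bihomogeneous.
Variable K : fieldType.
Implicit Types (F G : {mpoly K[4]}).

Lemma bihomog0 d1 d2 : bihomog d1 d2 (0 : {mpoly K[4]}).
Proof. by rewrite /bihomog msupp0. Qed.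

Lemma bihomog1 : bihomog 0 0 (1 : {mpoly K[4]}).
Proof. by rewrite /bihomog msupp1 /= !mnmE. Qed.

Lemma bihomogD d1 d2 F G :
  bihomog d1 d2 F -> bihomog d1 d2 G -> bihomog d1 d2 (F + G).
Proof.
move=> /allP hF /allP hG; apply/allP => m /msuppD_le; rewrite mem_cat.
by case/orP => [/hF|/hG].
Qed.

Lemma bihomogN d1 d2 F : bihomog d1 d2 F -> bihomog d1 d2 (- F).
Proof. by move=> /allP hF; apply/allP => m; rewrite (perm_mem (msuppN F)) => /hF. Qed.

Lemma bihomogB d1 d2 F G :
  bihomog d1 d2 F -> bihomog d1 d2 G -> bihomog d1 d2 (F - G).
Proof. by move=> hF hG; apply: bihomogD => //; apply: bihomogN. Qed.

Lemma bihomogZ d1 d2 c F : bihomog d1 d2 F -> bihomog d1 d2 (c *: F).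
Proof. by move=> /allP hF; apply/allP => m /msuppZ_le /hF. Qed.

Lemma bihomogM d1 d2 e1 e2 F G :
  bihomog d1 d2 F -> bihomog e1 e2 G -> bihomog (d1 + e1) (d2 + e2) (F * G).
Proof.
move=> /allP hF /allP hG; apply/allP => m.
move=> /msuppM_le /allpairsP [[m1 m2] /= [mF mG ->]].
move: (hF _ mF) (hG _ mG) => /andP[/eqP F1 /eqP F2] /andP[/eqP G1 /eqP G2].
by rewrite !mnmDE addnACA F1 G1 eqxx addnACA F2 G2 eqxx.
Qed.

Lemma bihomogXn d1 d2 k F : bihomog d1 d2 F -> bihomog (d1 * k) (d2 * k) (F ^+ k).
Proof.
move=> hF; elim: k => [|k IHk]; first by rewrite !muln0 expr0 bihomog1.
by rewrite exprS !mulnS; apply: bihomogM.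
Qed.

Lemma bihomogX i :
  bihomog ((i == vx0) + (i == vx1)) ((i == vy0) + (i == vy1)) ('X_i : {mpoly K[4]}).
Proof. by rewrite /bihomog msuppX /= !mnm1E !eqxx. Qed.

Lemma bihomog_homogenize d1 d2 m (p : {poly K}) F G :
  bihomog d1 d2 F -> bihomog d1 d2 G ->
  bihomog (d1 * m) (d2 * m) (homogenize m (map_poly (@mpolyC 4 K) p) F G).
Proof.
move=> hF hG; apply: (big_ind (bihomog _ _)) => [|F1 F2|i _]; first exact: bihomog0.
  exact: bihomogD.
have split_deg d : (d * m = d * i + d * (m - i))%N by rewrite -mulnDr subnKC // -ltnS.
rewrite coef_map /= mul_mpolyC split_deg [(d2 * m)%N]split_deg.
by apply/bihomogZ/bihomogM; apply: bihomogXn.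
Qed.

End Bihomogeneous.

Section LinearForms.
Variable K : fieldType.
Implicit Types (p q u v : K * K).

Definition det2 u v : K := u.1 * v.2 - u.2 * v.1.

Definition xform p : {mpoly K[4]} := p.2 *: 'X_vx0 - p.1 *: 'X_vx1.
Definition yform p : {mpoly K[4]} := p.2 *: 'X_vy0 - p.1 *: 'X_vy1.

Lemma det2xx u : det2 u u = 0.
Proof. by rewrite /det2 mulrC subrr. Qed.

Lemma det2C u v : det2 u v = - det2 v u.
Proof. by rewrite /det2 opprB mulrC [u.2 * _]mulrC. Qed.

Lemma det20x u : det2 (0, 0) u = 0.
Proof. by rewrite /det2 !mul0r subrr. Qed.

Lemma det2_eq0_indep p q u :
  det2 p q != 0 -> det2 u p = 0 -> det2 u q = 0 -> u = (0, 0).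
Proof.
move=> pq0 up0 uq0.
have u1E : u.1 * det2 p q = p.1 * det2 u q - q.1 * det2 u p by rewrite /det2; ring.
have u2E : u.2 * det2 p q = p.2 * det2 u q - q.2 * det2 u p by rewrite /det2; ring.
move: u1E u2E; rewrite up0 uq0 !mulr0 subrr => /eqP + /eqP.
rewrite !mulf_eq0 (negbTE pq0) !orbF => /eqP u1 /eqP u2.
by rewrite [u]surjective_pairing u1 u2.
Qed.

Lemma meval_xform u v p : (xform p).@[pt4 u v] = det2 u p.
Proof.
rewrite mevalB !mevalZ !mevalXU /pt4 nth4_vx0 nth4_vx1.
by rewrite /det2 !(mulrC p.1) !(mulrC p.2).
Qed.

Lemma meval_yform u v q : (yform q).@[pt4 u v] = det2 v q.
Proof.
rewrite mevalB !mevalZ !mevalXU /pt4 nth4_vy0 nth4_vy1.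
by rewrite /det2 !(mulrC q.1) !(mulrC q.2).
Qed.

Lemma mderivdir_xform u v p : mderivdir (pt4 u v) (xform p) = (det2 u p)%:MP.
Proof.
rewrite linearB !linearZ /= !mderivdirX /pt4 nth4_vx0 nth4_vx1 scalerN.
by rewrite -!mul_mpolyC -!rmorphM -rmorphB /det2 !(mulrC p.1) !(mulrC p.2).
Qed.

Lemma mderivdir_yform u v q : mderivdir (pt4 u v) (yform q) = (det2 v q)%:MP.
Proof.
rewrite linearB !linearZ /= !mderivdirX /pt4 nth4_vy0 nth4_vy1 scalerN.
by rewrite -!mul_mpolyC -!rmorphM -rmorphB /det2 !(mulrC q.1) !(mulrC q.2).
Qed.

Lemma restr_x_xform a p : restr_x a (xform p) = (det2 a p)%:MP.
Proof.
rewrite /restr_x comp_mpolyB !comp_mpolyZ !comp_mpolyXU /= nth4_vx0 nth4_vx1.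
by rewrite -!mul_mpolyC -!rmorphM -rmorphB /det2 !(mulrC p.1) !(mulrC p.2).
Qed.

Lemma restr_x_yform a q : restr_x a (yform q) = yform q.
Proof. by rewrite /restr_x comp_mpolyB !comp_mpolyZ !comp_mpolyXU /= nth4_vy0 nth4_vy1. Qed.

Lemma restr_y_xform b p : restr_y b (xform p) = xform p.
Proof. by rewrite /restr_y comp_mpolyB !comp_mpolyZ !comp_mpolyXU /= nth4_vx0 nth4_vx1. Qed.

Lemma restr_y_yform b q : restr_y b (yform q) = (det2 b q)%:MP.
Proof.
rewrite /restr_y comp_mpolyB !comp_mpolyZ !comp_mpolyXU /= nth4_vy0 nth4_vy1.
by rewrite -!mul_mpolyC -!rmorphM -rmorphB /det2 !(mulrC q.1) !(mulrC q.2).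
Qed.

Lemma bihomog_xform p : bihomog 1 0 (xform p).
Proof.
by apply: bihomogB; apply: bihomogZ;
  move: (bihomogX K vx0) (bihomogX K vx1); rewrite -!val_eqE /= !inordK.
Qed.

Lemma bihomog_yform p : bihomog 0 1 (yform p).
Proof.
by apply: bihomogB; apply: bihomogZ;
  move: (bihomogX K vy0) (bihomogX K vy1); rewrite -!val_eqE /= !inordK.
Qed.

End LinearForms.

Section Curve.
Variables (K : fieldType) (m n : nat) (p1 p2 : {poly K}) (k : K) (a b c e : K * K).

Local Notation mpolyCK := (@mpolyC 4 K).

Definition curve : {mpoly K[4]} :=
  xform e ^+ m.+1 * yform c ^+ n.+1 -
  k *: (homogenize m.+1 (map_poly mpolyCK p1) (xform e) (xform a) *
        homogenize n.+1 (map_poly mpolyCK p2) (yform c) (yform b)).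

Lemma bihomog_curve : bihomog m.+1 n.+1 curve.
Proof.
have bh1 := bihomog_homogenize m.+1 p1 (bihomog_xform e) (bihomog_xform a).
have bh2 := bihomog_homogenize n.+1 p2 (bihomog_yform c) (bihomog_yform b).
have bhX := bihomogXn m.+1 (bihomog_xform e).
have bhY := bihomogXn n.+1 (bihomog_yform c).
apply: bihomogB; last apply: bihomogZ.
  by move: (bihomogM bhX bhY); rewrite !mul1n !mul0n addn0 add0n.
by move: (bihomogM bh1 bh2); rewrite !mul1n !mul0n addn0 add0n.
Qed.

Lemma restr_x_curve : p1`_0 = 0 ->
  restr_x a curve = det2 a e ^+ m.+1 *: yform c ^+ n.+1.
Proof.
move=> p1_0; rewrite /restr_x /curve comp_mpolyB comp_mpolyZ !rmorphM !rmorphXn /=.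
rewrite !comp_mpoly_homogenize -!/(restr_x a _) !restr_x_xform !restr_x_yform.
rewrite det2xx homogenize_t0 coef_map /= p1_0 !mul0r scaler0 subr0.
by rewrite -rmorphXn mul_mpolyC.
Qed.

Lemma restr_y_curve : p2`_0 = 0 ->
  restr_y b curve = det2 b c ^+ n.+1 *: xform e ^+ m.+1.
Proof.
move=> p2_0; rewrite /restr_y /curve comp_mpolyB comp_mpolyZ !rmorphM !rmorphXn /=.
rewrite !comp_mpoly_homogenize -!/(restr_y b _) !restr_y_xform !restr_y_yform.
rewrite det2xx homogenize_t0 coef_map /= p2_0 !mul0r mulr0 scaler0 subr0.
by rewrite -rmorphXn mulrC mul_mpolyC.
Qed.

Lemma meval_curve u v : curve.@[pt4 u v] =
  det2 u e ^+ m.+1 * det2 v c ^+ n.+1 -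
  k * (homogenize m.+1 p1 (det2 u e) (det2 u a) *
       homogenize n.+1 p2 (det2 v c) (det2 v b)).
Proof.
rewrite mevalB mevalM mevalZ mevalM !rmorphXn /= !meval_homogenize.
by rewrite !meval_xform !meval_yform.
Qed.

Lemma curve_neq0 : p1`_0 = 0 -> det2 e a != 0 -> det2 c b != 0 -> curve != 0.
Proof.
move=> p1_0 ea0 cb0; apply/eqP => /(congr1 (meval (pt4 a b))).
rewrite meval_curve meval0 det2xx homogenize_t0 p1_0 !mul0r mulr0 subr0 => /eqP.
rewrite mulf_eq0 !expf_eq0 [det2 a e]det2C [det2 b c]det2C !oppr_eq0.
by rewrite (negbTE ea0) (negbTE cb0) !andbF.
Qed.

Lemma mderivdir_curve_x :
  mderivdir (pt4 e (0, 0)) curve =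
  (- (k * det2 e a))%:MP *
    (homogenize m (map_poly mpolyCK p1^`()) (xform e) (xform a) *
     homogenize n.+1 (map_poly mpolyCK p2) (yform c) (yform b)).
Proof.
have Dcoef p i : mderivdir (pt4 e (0, 0)) (map_poly mpolyCK p)`_i = 0.
  by rewrite coef_map mderivdirC.
rewrite /curve linearB linearZ /= !mderivdirM !mderivdirXn.
rewrite !mderivdir_homogenize ?mderivdir_xform ?mderivdir_yform ?det2xx ?det20x //.
rewrite !deriv_map -mul_mpolyC; ring.
Qed.

Lemma mderivdir_curve_y :
  mderivdir (pt4 (0, 0) c) curve =
  (- (k * det2 c b))%:MP *
    (homogenize m.+1 (map_poly mpolyCK p1) (xform e) (xform a) *
     homogenize n (map_poly mpolyCK p2^`()) (yform c) (yform b)).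
Proof.
have Dcoef p i : mderivdir (pt4 (0, 0) c) (map_poly mpolyCK p)`_i = 0.
  by rewrite coef_map mderivdirC.
rewrite /curve linearB linearZ /= !mderivdirM !mderivdirXn.
rewrite !mderivdir_homogenize ?mderivdir_xform ?mderivdir_yform ?det2xx ?det20x //.
rewrite !deriv_map -mul_mpolyC; ring.
Qed.

Lemma smooth_curve :
  separable_poly p1 -> size p1 = m.+2 -> separable_poly p2 -> size p2 = n.+2 ->
  k != 0 ->
  (forall x1 x2, root p1^`() x1 -> root p2^`() x2 -> k * (p1.[x1] * p2.[x2]) != 1) ->
  det2 e a != 0 -> det2 c b != 0 -> smooth_bihom curve.
Proof.
move=> sep1 sz1 sep2 sz2 k0 k_generic ea0 cb0 u v u0 v0 [F0 dF].
have D0 w : (mderivdir w curve).@[pt4 u v] = 0.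
  by rewrite meval_mderivdir big1 // => i _; rewrite dF mulr0.
have Dx := D0 (pt4 e (0, 0)); have Dy := D0 (pt4 (0, 0) c).
rewrite mderivdir_curve_x mevalM mevalC mevalM !meval_homogenize in Dx.
rewrite mderivdir_curve_y mevalM mevalC mevalM !meval_homogenize in Dy.
rewrite !meval_xform !meval_yform in Dx Dy.
apply: (@model_curve_nonsingular _ _ _ _ _ _ (det2 u e) (det2 u a) (det2 v c) (det2 v b)
  sep1 sz1 sep2 sz2 k0 k_generic).
- by apply: contra u0 => /eqP [ue ua]; apply/eqP; exact: det2_eq0_indep ea0 ue ua.
- by apply: contra v0 => /eqP [vc vb]; apply/eqP; exact: det2_eq0_indep cb0 vc vb.
- by move/eqP: F0; rewrite meval_curve subr_eq0 => /eqP.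
- by move/eqP: Dx; rewrite mulf_eq0 oppr_eq0 mulf_eq0 (negbTE k0) (negbTE ea0) => /eqP.
- by move/eqP: Dy; rewrite mulf_eq0 oppr_eq0 mulf_eq0 (negbTE k0) (negbTE cb0) => /eqP.
Qed.

End Curve.

Section ClosedField.
Variable K : closedFieldType.

Lemma closed_field_notin (s : seq K) : exists x, x \notin s.
Proof.
have /closed_nonrootP [x] : \prod_(z <- s) ('X - z%:P) != 0 :> {poly K}.
  by rewrite monic_neq0 // monic_prod_XsubC.
by rewrite root_prod_XsubC; exists x.
Qed.

Lemma exists_separable_root0 n :
  exists p : {poly K}, [/\ size p = n.+2, p`_0 = 0 & separable_poly p].
Proof.
have [r [uniq_r size_r]] : exists r : seq K, uniq (0 :: r) /\ size r = n.
  elim: n => [|n [r [uniq_r size_r]]]; first by exists [::].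
  have [x x_new] := closed_field_notin (0 :: r).
  exists (x :: r); split; last by rewrite /= size_r.
  move: uniq_r x_new; rewrite /= !inE !negb_or => /andP[r0 uniq_r] /andP[x0 xr].
  by rewrite eq_sym x0 r0 xr uniq_r.
exists (\prod_(x <- 0 :: r) ('X - x%:P)); split.
- by rewrite size_prod_XsubC /= size_r.
- by rewrite -horner_coef0 horner_prod big_cons hornerXsubC subrr mul0r.
- by rewrite separable_prod_XsubC.
Qed.

Lemma closed_field_roots (q : {poly K}) :
  q != 0 -> exists rs : seq K, forall x, root q x -> x \in rs.
Proof.
move=> q0; have [rs qE] := closed_field_poly_normal q; exists rs => x.
by rewrite qE rootZ ?lead_coef_eq0 // root_prod_XsubC.
Qed.

Lemma exists_generic_scalar (p1 p2 q1 q2 : {poly K}) : q1 != 0 -> q2 != 0 ->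
  exists2 k, k != 0 &
    forall x1 x2, root q1 x1 -> root q2 x2 -> k * (p1.[x1] * p2.[x2]) != 1.
Proof.
move=> /closed_field_roots[rs1 roots1] /closed_field_roots[rs2 roots2].
pose f x1 x2 := (p1.[x1] * p2.[x2])^-1.
have [k] := closed_field_notin (0 :: [seq f x1 x2 | x1 <- rs1, x2 <- rs2]).
rewrite inE negb_or => /andP[k0 k_new]; exists k => // x1 x2 rx1 rx2.
apply: contra k_new => /eqP kP; have P0 : p1.[x1] * p2.[x2] != 0.
  by apply/eqP => P0; move: kP; rewrite P0 mulr0 => /eqP; rewrite eq_sym oner_eq0.
have -> : k = f x1 x2 by apply: (mulIf P0); rewrite kP mulVf.
by apply: allpairs_f; [apply: roots1 | apply: roots2].
Qed.

End ClosedField.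

Theorem theorem4p3 (K : closedFieldType) (d1 d2 : nat)
    (a b c e : K * K) :
  (0 < d1)%N -> (d1 <= d2)%N ->
  a != (0, 0) -> b != (0, 0) -> c != (0, 0) -> e != (0, 0) ->
  c.1 * b.2 - c.2 * b.1 != 0 ->
  e.1 * a.2 - e.2 * a.1 != 0 ->
  exists F : {mpoly K[4]},
    [/\ F != 0, bihomog d1 d2 F, smooth_bihom F,
        exists2 lam : K, lam != 0 &
          restr_x a F = lam *: (c.2 *: 'X_vy0 - c.1 *: 'X_vy1) ^+ d2
      & exists2 mu : K, mu != 0 &
          restr_y b F = mu *: (e.2 *: 'X_vx0 - e.1 *: 'X_vx1) ^+ d1].
Proof.
(* The nonvanishing of [a], [b], [c], [e] follows from that of the two
   determinants. *)
case: d1 => [//|m] _; case: d2 => [//|n] _ _ _ _ _ cb0 ea0.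
have [p1 [sz1 p1_0 sep1]] := exists_separable_root0 K m.
have [p2 [sz2 p2_0 sep2]] := exists_separable_root0 K n.
have d1_0 : p1^`() != 0 by rewrite (separable_deriv_eq0 sep1 (dvdpp p1)) ?sz1.
have d2_0 : p2^`() != 0 by rewrite (separable_deriv_eq0 sep2 (dvdpp p2)) ?sz2.
have [k k0 k_generic] := exists_generic_scalar p1 p2 d1_0 d2_0.
exists (curve m n p1 p2 k a b c e); split.
- exact: curve_neq0.
- exact: bihomog_curve.
- exact: smooth_curve.
- exists (det2 a e ^+ m.+1); last exact: restr_x_curve.
  by rewrite expf_neq0 // det2C oppr_eq0.
- exists (det2 b c ^+ n.+1); last exact: restr_y_curve.
  by rewrite expf_neq0 // det2C oppr_eq0.
Qed.
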